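(* Let $r\ge2$, $\mathbf z=(z_1,\dots,z_r)^\intercal\in\Omega^r$, and $t\in\mathbb C_\infty$ with $|t|_\infty\le1$. Then \[\sum'_{a_1,\dots,a_r\in A}\frac{a_1(t)}{a_1z_1+\dots+a_rz_r}=\tilde\pi\sum_{0\ne a_1\in A}a_1(t)\,u_{a_1}(\mathbf z).\]
   Context: Let $q$ be a prime power, $A=\mathbb F_q[\theta]$, $|\theta|_\infty=q$, $K_\infty=\mathbb F_q((1/\theta))$, $\mathbb C_\infty$ the completion of an algebraic closure of $K_\infty$; $a(t)$ is $a\in A$ with $\theta$ replaced by $t$. Fix $(-\theta)^{1/(q-1)}$, $\tilde\pi=\theta(-\theta)^{1/(q-1)}\prod_{i\ge1}(1-\theta^{1-q^i})^{-1}$. For an $A$-lattice $\Lambda\subset\mathbb C_\infty$ (free finitely generated discrete $A$-module), $\exp_\Lambda(x)=x\prod_{0\ne\lambda\in\Lambda}(1-x/\lambda)$. $\Omega^r$: vectors $\mathbf z=(z_1,\dots,z_r)^\intercal\in\mathbb C_\infty^r$ with $K_\infty$-linearly independent entries and $z_r=1$; $\tilde{\mathbf z}=(z_2,\dots,z_r)^\intercal$, $\tilde\pi\tilde{\mathbf z}A=A\tilde\pi z_2+\dots+A\tilde\pi z_r$. For $a\in A$, $u_a(\mathbf z)=\exp_{\tilde\pi\tilde{\mathbf z}A}(\tilde\pi az_1)^{-1}$. $\sum'$ excludes $(a_1,\dots,a_r)=(0,\dots,0)$. *)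

(* C_infinity is modelled abstractly: we quantify over any
   algebraically closed field C with a real absolute value satisfying the
   axioms that characterise C_infinity up to isometric isomorphism. *)
From HB Require Import structures.
From mathcomp Require Import all_boot all_order all_algebra.
From mathcomp Require Import reals.
Set Implicit Arguments. Unset Strict Implicit. Unset Printing Implicit Defensive.
Import Order.TTheory GRing.Theory Num.Theory.
Local Open Scope ring_scope.

Section CinfDefs.
Variables (R : realType) (F : finFieldType) (C : closedFieldType).
Variables (abs : C -> R) (iota : {rmorphism F -> C}) (theta : C).

Definition qF : nat := #|F|.

(* a(x) : the element a of A = F_q[theta] with theta replaced by x *)
Definition evalA (a : {poly F}) (x : C) : C := (map_poly iota a).[x].

Definition polyOf (N : nat) (g : {ffun 'I_N -> F}) : {poly F} := \sum_(i < N) g i *: 'X^i.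

Definition abs_axioms : Prop :=
  (forall x, 0 <= abs x) /\ (forall x, abs x = 0 <-> x = 0) /\
  (forall x y, abs (x * y) = abs x * abs y) /\
  (forall x y, abs (x + y) <= Num.max (abs x) (abs y)).

Definition cvgC (u : nat -> C) (l : C) : Prop :=
  forall eps : R, 0 < eps -> exists N, forall n, (N <= n)%N -> abs (u n - l) < eps.

Definition cauchyC (u : nat -> C) : Prop :=
  forall eps : R, 0 < eps -> exists N, forall m n,
    (N <= m)%N -> (N <= n)%N -> abs (u m - u n) < eps.

Definition completeC : Prop := forall u, cauchyC u -> exists l, cvgC u l.

(* K_infinity: the closure of F_q(theta) in C *)
Definition Kinf (x : C) : Prop :=
  exists a b : nat -> {poly F}, (forall n, b n != 0) /\
    cvgC (fun n => evalA (a n) theta / evalA (b n) theta) x.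

Definition alg_over_Kinf (x : C) : Prop :=
  exists p : {poly C}, p != 0 /\ (forall i, Kinf p`_i) /\ root p x.

Definition is_Cinf : Prop :=
  abs_axioms /\ abs theta = (qF%:R : R) /\ completeC /\
  (forall x (eps : R), 0 < eps -> exists y, alg_over_Kinf y /\ abs (x - y) < eps).

(* Omega^r, with z indexed 0..r-1 (z i = z_{i+1} of the paper) *)
Definition in_Omega (r : nat) (z : nat -> C) : Prop :=
  (forall c : nat -> C, (forall i, (i < r)%N -> Kinf (c i)) ->
     \sum_(i < r) c i * z i = 0 -> forall i, (i < r)%N -> c i = 0) /\
  z r.-1 = 1.

(* partial products defining pi~ = theta xi prod_{i>=1} (1 - theta^(1-q^i))^-1 *)
Definition pi_partial (xi : C) (N : nat) : C :=
  theta * xi * \prod_(1 <= i < N.+1) (1 - (theta ^+ (qF ^ i - 1))^-1)^-1.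

(* partial products of exp_{pi~ z~ A}(pi~ a z_1), over lattice elements
   pi~ (a_2 z_2 + ... + a_r z_r) with deg a_j < N *)
Definition exp_partial (r : nat) (z : nat -> C) (pit : C) (a : {poly F}) (N : nat) : C :=
  let x := pit * evalA a theta * z 0%N in
  x * \prod_(g : {ffun 'I_r.-1 -> {ffun 'I_N -> F}} | g != 0)
        (1 - x / (pit * \sum_(j < r.-1) evalA (polyOf (g j)) theta * z j.+1)).

(* partial sums of the LHS over (a_1,...,a_r) != 0 with deg a_i < N *)
Definition lhs_partial (r : nat) (z : nat -> C) (t : C) (N : nat) : C :=
  \sum_(f : {ffun 'I_r -> {ffun 'I_N -> F}} | f != 0)
     (* numerator a_1(t): the (only) index i with val i = 0 *)
     (\sum_(i < r | val i == 0%N) evalA (polyOf (f i)) t) /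
     (\sum_(i < r) evalA (polyOf (f i)) theta * z i).

(* partial sums of  pi~ * sum_{a_1 != 0} a_1(t) u_{a_1}(z),  deg a_1 < N,
   where E a = exp_{pi~ z~ A}(pi~ a z_1) so u_a(z) = (E a)^-1 *)
Definition rhs_partial (pit : C) (E : {poly F} -> C) (t : C) (N : nat) : C :=
  pit * \sum_(g : {ffun 'I_N -> F} | g != 0) evalA (polyOf g) t * (E (polyOf g))^-1.

End CinfDefs.

From HB Require Import structures.
From mathcomp Require Import all_boot all_order all_algebra.
From mathcomp Require Import reals boolp.
From mathcomp Require Import finfield ring zify.
Import Order.TTheory GRing.Theory Num.Theory.
Local Open Scope ring_scope.
Set Implicit Arguments. Unset Strict Implicit. Unset Printing Implicit Defensive.

(* Everything is truncated to polynomials of degree [< N] and shown to converge in the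
   complete field [C]. As [z_1, ..., z_r] are linearly independent over [K_infinity], the
   closure of [F_q(theta)], there is [c > 0] with [c |b_j(theta)| <= |sum_i b_i(theta) z_i|]
   for all polynomials [b_i] (otherwise [z_k] would be a limit of [F_q(theta)]-combinations of
   [z_1, ..., z_(k-1)]). Hence a lattice combination with a coefficient of degree [N] has
   absolute value at least [c q^N], so each truncated sum moves by at most [(c q^N)^-1] when
   [N] grows (with [|a(t)| <= 1] in the numerators), and the two truncated sides of the
   identity stay within [(c q^N)^-1] of each other. They are matched, for each [a_1], by the
   identity [y prod_(v != 0) (1 - y / v) * sum_v (y + v)^-1 = 1] for a finite additive group
   [V]: the derivative of [prod_(w in V) (X - w)] is invariant under translation by [V] and
   has degree [< |V|], hence is constant. *)

Section UltrametricAbs.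
Variables (R : realType) (C : closedFieldType) (abs : C -> R).
Hypothesis abs_ax : abs_axioms abs.

Lemma abs_ge0 x : 0 <= abs x. Proof. by case: abs_ax. Qed.
Lemma abs_eq0 x : abs x = 0 <-> x = 0. Proof. by case: abs_ax => _ []. Qed.
Lemma absM x y : abs (x * y) = abs x * abs y. Proof. by case: abs_ax => _ [_ []]. Qed.
Lemma abs_add_le_max x y : abs (x + y) <= Num.max (abs x) (abs y).
Proof. by case: abs_ax => _ [_ [_]]. Qed.

Lemma abs0 : abs 0 = 0. Proof. exact/abs_eq0. Qed.

Lemma abs_gt0 x : x != 0 -> 0 < abs x.
Proof. by move=> /eqP nx; rewrite lt_def abs_ge0 andbT; apply/eqP => /abs_eq0. Qed.

Lemma abs1 : abs 1 = 1.
Proof.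
have abs1_gt0 : 0 < abs 1 by rewrite abs_gt0 ?oner_eq0.
by apply: (mulIf (lt0r_neq0 abs1_gt0)); rewrite -absM !mul1r.
Qed.

Lemma absN x : abs (- x) = abs x.
Proof.
have absN1 : abs (-1) = 1.
  apply/eqP; rewrite -(@pexpr_eq1 _ _ 2) ?abs_ge0 //.
  by rewrite expr2 -absM mulrNN mulr1 abs1.
by rewrite -mulN1r absM absN1 mul1r.
Qed.

Lemma abs_distC x y : abs (x - y) = abs (y - x).
Proof. by rewrite -absN opprB. Qed.

Lemma absV x : abs x^-1 = (abs x)^-1.
Proof.
have [->|nx] := eqVneq x 0; first by rewrite invr0 abs0 invr0.
by apply: (mulfI (lt0r_neq0 (abs_gt0 nx))); rewrite -absM !mulfV ?abs1 ?lt0r_neq0 ?abs_gt0.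
Qed.

Lemma absX x n : abs (x ^+ n) = abs x ^+ n.
Proof. by elim: n => [|n IH]; rewrite ?expr0 ?abs1 // !exprS absM IH. Qed.

Lemma abs_prod (I : Type) (s : seq I) (P : pred I) (f : I -> C) :
  abs (\prod_(i <- s | P i) f i) = \prod_(i <- s | P i) abs (f i).
Proof. exact: (big_morph abs absM abs1). Qed.

Lemma abs_sub_le_max x y : abs (x - y) <= Num.max (abs x) (abs y).
Proof. by rewrite -(absN y) abs_add_le_max. Qed.

Lemma abs_add_le x y B : abs x <= B -> abs y <= B -> abs (x + y) <= B.
Proof. by move=> hx hy; apply: le_trans (abs_add_le_max x y) _; rewrite ge_max hx hy. Qed.

Lemma abs_add_lt x y B : abs x < B -> abs y < B -> abs (x + y) < B.
Proof. by move=> hx hy; apply: le_lt_trans (abs_add_le_max x y) _; rewrite gt_max hx hy. Qed.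

Lemma abs_sub_lt x y B : abs x < B -> abs y < B -> abs (x - y) < B.
Proof. by move=> hx hy; apply: abs_add_lt; rewrite ?absN. Qed.

Lemma abs_add_dom x y : abs y < abs x -> abs (x + y) = abs x.
Proof.
move=> hyx; apply/le_anti/andP; split; first exact/abs_add_le/ltW.
have := abs_add_le_max (x + y) (- y); rewrite addrK absN le_max.
by case/orP=> // /le_lt_trans/(_ hyx); rewrite ltxx.
Qed.

Lemma abs_1_sub x : abs x < 1 -> abs (1 - x) = 1.
Proof. by move=> x_lt1; rewrite abs_add_dom ?abs1 // absN. Qed.

Lemma abs_sum_le (I : Type) (s : seq I) (P : pred I) (f : I -> C) B :
  0 <= B -> (forall i, P i -> abs (f i) <= B) -> abs (\sum_(i <- s | P i) f i) <= B.
Proof.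
by move=> hB hf; elim/big_ind: _ => [|x y|i /hf] //; [rewrite abs0 | apply: abs_add_le].
Qed.

Lemma abs_sum_lt (I : Type) (s : seq I) (P : pred I) (f : I -> C) B :
  0 < B -> (forall i, P i -> abs (f i) < B) -> abs (\sum_(i <- s | P i) f i) < B.
Proof.
by move=> hB hf; elim/big_ind: _ => [|x y|i /hf] //; [rewrite abs0 | apply: abs_add_lt].
Qed.

Lemma abs_lt_eq0 x : (forall eps : R, 0 < eps -> abs x < eps) -> x = 0.
Proof.
move=> small; apply/abs_eq0/le_anti; rewrite abs_ge0 andbT leNgt.
by apply/negP => /small; rewrite ltxx.
Qed.

End UltrametricAbs.

Lemma invSn_lt (R : realType) (eps : R) :
  0 < eps -> exists N, forall n, (N <= n)%N -> n.+1%:R^-1 < eps.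
Proof.
move=> eps_gt0; exists (Num.Def.archi_bound eps^-1) => n hn.
have /archi_boundP bound : 0 <= eps^-1 by rewrite invr_ge0 ltW.
rewrite -[eps]invrK ltf_pV2 ?posrE ?invr_gt0 ?ltr0n //.
by apply: lt_le_trans bound _; rewrite ler_nat leqW.
Qed.

Section Convergence.
Variables (R : realType) (C : closedFieldType) (abs : C -> R).
Hypothesis abs_ax : abs_axioms abs.

Lemma eq_cvgC (u v : nat -> C) l : cvgC abs u l -> u =1 v -> cvgC abs v l.
Proof. by move=> ul uv eps /ul[N hN]; exists N => n /hN; rewrite uv. Qed.

Lemma cvgC_cst a : cvgC abs (fun=> a) a.
Proof. by move=> eps eps_gt0; exists 0%N => n _; rewrite subrr abs0. Qed.

Lemma cvgCD (u v : nat -> C) a b :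
  cvgC abs u a -> cvgC abs v b -> cvgC abs (fun n => u n + v n) (a + b).
Proof.
move=> ua vb eps /[dup] /ua[N1 h1] /vb[N2 h2]; exists (maxn N1 N2) => n.
rewrite geq_max => /andP[/h1 un /h2 vn].
by rewrite opprD addrACA; apply: (abs_add_lt abs_ax).
Qed.

Lemma cvgCMr (u : nat -> C) a c : cvgC abs u a -> cvgC abs (fun n => u n * c) (a * c).
Proof.
have [->|c_neq0] := eqVneq c 0.
  by move=> _; rewrite mulr0; apply: eq_cvgC (cvgC_cst 0) _ => n; rewrite mulr0.
have c_gt0 := abs_gt0 abs_ax c_neq0.
move=> ua eps eps_gt0; have [N hN] := ua _ (divr_gt0 eps_gt0 c_gt0).
by exists N => n /hN; rewrite -mulrBl absM // ltr_pdivlMr.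
Qed.

Lemma cvgC_sum k (u : nat -> nat -> C) (a : nat -> C) :
  (forall i, (i < k)%N -> cvgC abs (u^~ i) (a i)) ->
  cvgC abs (fun n => \sum_(i < k) u n i) (\sum_(i < k) a i).
Proof.
elim: k => [|k IH] uia.
  by rewrite big_ord0; apply: eq_cvgC (cvgC_cst 0) _ => n; rewrite big_ord0.
rewrite big_ord_recr; apply: eq_cvgC (cvgCD (IH _) (uia _ _)) _ => [i ik|//|n].
  exact/uia/ltnW.
by rewrite big_ord_recr.
Qed.

Lemma cvgC_unique (u : nat -> C) a b : cvgC abs u a -> cvgC abs u b -> a = b.
Proof.
move=> ua ub; apply/eqP; rewrite -subr_eq0; apply/eqP/(abs_lt_eq0 abs_ax) => eps.
move=> /[dup] /ua[N1 h1] /ub[N2 h2]; set n := maxn N1 N2.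
have -> : a - b = (u n - b) - (u n - a) by ring.
by apply: (abs_sub_lt abs_ax); [apply: h2; exact: leq_maxr | apply: h1; exact: leq_maxl].
Qed.

Lemma cvgC_abs_eq (u : nat -> C) a (K : R) N0 : cvgC abs u a -> 0 < K ->
  (forall n, (N0 <= n)%N -> abs (u n) = K) -> abs a = K.
Proof.
move=> ua K_gt0 uK; have [N hN] := ua _ K_gt0; set n := maxn N N0.
have -> : a = u n - (u n - a) by ring.
have un : abs (u n) = K by rewrite uK ?leq_maxr.
by rewrite abs_add_dom ?absN ?un ?hN ?leq_maxl.
Qed.

Lemma cvgC_inv (u : nat -> C) a (K : R) N0 : cvgC abs u a -> 0 < K ->
  (forall n, (N0 <= n)%N -> abs (u n) = K) -> cvgC abs (fun n => (u n)^-1) a^-1.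
Proof.
move=> ua K_gt0 uK eps eps_gt0; have aK := cvgC_abs_eq ua K_gt0 uK.
have [N hN] := ua _ (mulr_gt0 (mulr_gt0 eps_gt0 K_gt0) K_gt0).
exists (maxn N0 N) => n; rewrite geq_max => /andP[/uK un /hN una].
have nz x : abs x = K -> x != 0.
  by move=> xK; apply: contraTneq K_gt0 => x0; rewrite -xK x0 abs0 // ltxx.
have -> : (u n)^-1 - a^-1 = (a - u n) / (u n * a) by field; rewrite !nz.
by rewrite absM // absV // absM // un aK abs_distC // ltr_pdivrMr ?mulr_gt0 // mulrA.
Qed.

Lemma cvgC_to0 (u : nat -> C) : (forall n, abs (u n) < n.+1%:R^-1) -> cvgC abs u 0.
Proof.
move=> u_small eps /invSn_lt[N hN]; exists N => n /hN.
by rewrite subr0; apply: lt_trans.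
Qed.

Section Steps.
Variables (u : nat -> C) (d : nat -> R).
Hypothesis d_noninc : forall m n, (m <= n)%N -> d n <= d m.
Hypothesis u_steps : forall k, abs (u k.+1 - u k) <= d k.

Lemma abs_sub_le_steps n m : (n <= m)%N -> abs (u m - u n) <= d n.
Proof.
have d_ge0 k : 0 <= d k := le_trans (abs_ge0 abs_ax _) (u_steps k).
elim: m => [|m IH]; first by rewrite leqn0 => /eqP->; rewrite subrr abs0.
rewrite leq_eqVlt ltnS => /orP[/eqP->|nm]; first by rewrite subrr abs0.
have -> : u m.+1 - u n = (u m.+1 - u m) + (u m - u n) by rewrite addrA subrK.
by apply: (abs_add_le abs_ax) (IH nm); apply: le_trans (u_steps m) (d_noninc nm).
Qed.

Lemma cauchyC_steps : (forall eps, 0 < eps -> exists N, d N < eps) -> cauchyC abs u.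
Proof.
move=> d_small eps /d_small[N dN]; exists N => m n Nm Nn.
have -> : u m - u n = (u m - u N) - (u n - u N) by rewrite opprB addrA subrK.
by apply: (abs_sub_lt abs_ax); apply: le_lt_trans dN; apply: abs_sub_le_steps.
Qed.

Lemma cvgC_steps_sub_le l : cvgC abs u l -> forall n, abs (l - u n) <= d n.
Proof.
move=> ul n; rewrite leNgt; apply/negP => dn_lt.
have dn_ge0 : 0 <= d n := le_trans (abs_ge0 abs_ax _) (u_steps n).
have [M hM] := ul _ (le_lt_trans dn_ge0 dn_lt); set k := maxn M n.
have : abs (l - u n) < abs (l - u n).
  rewrite {1}(_ : l - u n = (u k - u n) - (u k - l)); last by ring.
  apply: (abs_sub_lt abs_ax); last exact: hM (leq_maxl M n).
  exact: le_lt_trans (abs_sub_le_steps (leq_maxr M n)) dn_lt.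
by rewrite ltxx.
Qed.

Lemma cvgC_steps : completeC abs -> (forall eps, 0 < eps -> exists N, d N < eps) ->
  exists l, cvgC abs u l /\ forall n, abs (l - u n) <= d n.
Proof.
move=> complete /cauchyC_steps/complete[l ul].
by exists l; split=> //; apply: cvgC_steps_sub_le.
Qed.

End Steps.

Lemma cvgC_near (u v : nat -> C) (d : nat -> R) S :
  (forall m n, (m <= n)%N -> d n <= d m) -> (forall eps, 0 < eps -> exists N, d N < eps) ->
  (forall n, abs (v n - u n) <= d n) -> cvgC abs u S -> cvgC abs v S.
Proof.
move=> d_noninc d_small vu uS eps /[dup] /d_small[N1 dN1] /uS[N2 h2].
exists (maxn N1 N2) => n; rewrite geq_max => /andP[N1n N2n].
have -> : v n - S = (v n - u n) + (u n - S) by rewrite addrA subrK.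
apply: (abs_add_lt abs_ax); last exact: h2.
by apply: le_lt_trans (vu n) (le_lt_trans (d_noninc _ _ N1n) dN1).
Qed.

End Convergence.

Section PolyOf.
Variables (F : finFieldType) (C : closedFieldType) (iota : {rmorphism F -> C}).

Lemma evalA0 x : evalA iota 0 x = 0.
Proof. by rewrite /evalA rmorph0 horner0. Qed.

Lemma evalA1 x : evalA iota 1 x = 1.
Proof. by rewrite /evalA rmorph1 hornerC. Qed.

Lemma evalAB a b x : evalA iota (a - b) x = evalA iota a x - evalA iota b x.
Proof. by rewrite /evalA rmorphB hornerD hornerN. Qed.

Lemma evalAM a b x : evalA iota (a * b) x = evalA iota a x * evalA iota b x.
Proof. by rewrite /evalA rmorphM hornerM. Qed.

Lemma evalA_coef a x : evalA iota a x = \sum_(i < size a) iota a`_i * x ^+ i.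
Proof.
by rewrite /evalA horner_coef size_map_poly; apply: eq_bigr => i _; rewrite coef_map.
Qed.

Lemma coef_polyOf N (g : {ffun 'I_N -> F}) (i : 'I_N) : (polyOf g)`_i = g i.
Proof.
rewrite /polyOf coef_sum (bigD1 i) //= coefZ coefXn eqxx mulr1 big1 ?addr0 // => j ji.
rewrite coefZ coefXn; case: eqP => [/val_inj ij|]; last by rewrite mulr0.
by rewrite ij eqxx in ji.
Qed.

Lemma coef_polyOf_ge N (g : {ffun 'I_N -> F}) i : (N <= i)%N -> (polyOf g)`_i = 0.
Proof.
move=> Ni; rewrite /polyOf coef_sum big1 // => j _.
by rewrite coefZ coefXn gtn_eqF ?mulr0 // (leq_trans (ltn_ord j)).
Qed.

Lemma polyOf0 N : polyOf (0 : {ffun 'I_N -> F}) = 0.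
Proof. by rewrite /polyOf big1 // => i _; rewrite ffunE scale0r. Qed.

Lemma polyOfB N (g h : {ffun 'I_N -> F}) : polyOf (g - h) = polyOf g - polyOf h.
Proof. by rewrite /polyOf -sumrB; apply: eq_bigr => i _; rewrite !ffunE scalerBl. Qed.

Lemma polyOf_inj N : injective (@polyOf F N).
Proof. by move=> g h gh; apply/ffunP => i; rewrite -!coef_polyOf gh. Qed.

End PolyOf.

Section CardPowers.
Context {R : realType} {F : finFieldType}.
Local Notation q := ((qF F)%:R : R).

Lemma qF_gt1 : (1 < qF F)%N.
Proof. exact: card_finNzRing_gt1. Qed.

Lemma qF_pred_gt0 : (0 < (qF F).-1)%N.
Proof. by rewrite -ltnS prednK ?qF_gt1 // ltnW ?qF_gt1. Qed.

Lemma q_gt1 : 1 < q.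
Proof. by rewrite ltr1n qF_gt1. Qed.

Lemma expq_gt0 n : 0 < q ^+ n.
Proof. by rewrite exprn_gt0 // (lt_trans ltr01 q_gt1). Qed.

Lemma expq_le m n : (m <= n)%N -> q ^+ m <= q ^+ n.
Proof. by move=> mn; rewrite ler_eXn2l // q_gt1. Qed.

Lemma expq_lt m n : (m < n)%N -> q ^+ m < q ^+ n.
Proof. by move=> mn; rewrite ltr_eXn2l // q_gt1. Qed.

Lemma expq_ge n : n.+1%:R <= q ^+ n.
Proof. by rewrite -natrX ler_nat; apply: leq_trans (ltn_expl _ qF_gt1) _. Qed.

End CardPowers.

Section AbsEvalA.
Variables (R : realType) (F : finFieldType) (C : closedFieldType).
Variables (abs : C -> R) (iota : {rmorphism F -> C}) (theta : C).
Hypothesis abs_ax : abs_axioms abs.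
Local Notation q := ((qF F)%:R : R).

(* Nonzero constants are roots of unity, of order dividing q - 1. *)
Lemma abs_iota (c : F) : c != 0 -> abs (iota c) = 1.
Proof.
move=> c_neq0; have q_gt0 : (0 < qF F)%N := ltnW qF_gt1.
have cq1 : c ^+ (qF F).-1 = 1.
  by apply: (mulIf c_neq0); rewrite mul1r -exprSr prednK //; apply: expf_card.
apply/eqP; rewrite -(pexpr_eq1 (@qF_pred_gt0 F) (abs_ge0 abs_ax _)).
by rewrite -absX // -rmorphXn cq1 rmorph1 abs1.
Qed.

Lemma abs_iota_le1 c : abs (iota c) <= 1.
Proof. by have [->|/abs_iota->] := eqVneq c 0; rewrite ?rmorph0 ?abs0. Qed.

Lemma abs_evalA_le1 a t : abs t <= 1 -> abs (evalA iota a t) <= 1.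
Proof.
move=> t_le1; rewrite evalA_coef; apply: (abs_sum_le abs_ax) => // i _.
rewrite absM // absX //; apply: mulr_ile1; rewrite ?exprn_ge0 ?abs_ge0 ?abs_iota_le1 //.
exact: exprn_ile1 (abs_ge0 abs_ax t) t_le1.
Qed.

Hypothesis abs_theta : abs theta = q.

(* The leading monomial strictly dominates all the others. *)
Lemma abs_evalA_theta (a : {poly F}) :
  a != 0 -> abs (evalA iota a theta) = q ^+ (size a).-1.
Proof.
move=> a_neq0; set d := (size a).-1.
have size_a : size a = d.+1 by rewrite prednK // size_poly_gt0.
have lead_neq0 : a`_d != 0 by rewrite /d -lead_coefE lead_coef_eq0.
have lead : abs (iota a`_d * theta ^+ d) = q ^+ d.
  by rewrite absM // abs_iota // mul1r absX // abs_theta.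
rewrite evalA_coef size_a big_ord_recr /= addrC abs_add_dom ?lead //.
apply: (abs_sum_lt abs_ax) => [|i _]; first exact: expq_gt0.
rewrite absM // absX // abs_theta; apply: le_lt_trans (expq_lt (ltn_ord i)).
by rewrite ler_piMl ?abs_iota_le1 // ltW ?expq_gt0.
Qed.

Lemma evalA_theta_neq0 (a : {poly F}) : a != 0 -> evalA iota a theta != 0.
Proof.
move=> a_neq0; apply: contraTneq (@expq_gt0 R F (size a).-1) => a0.
by rewrite -abs_evalA_theta // a0 abs0 // ltxx.
Qed.

End AbsEvalA.

Section LowerBound.
Variables (R : realType) (F : finFieldType) (C : closedFieldType).
Variables (abs : C -> R) (iota : {rmorphism F -> C}) (theta : C).
Hypothesis abs_ax : abs_axioms abs.
Hypothesis abs_theta : abs theta = (qF F)%:R.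
Hypothesis complete : completeC abs.
Local Notation ev a := (evalA iota a theta).
Local Notation Kinf := (Kinf abs iota theta).

Definition in_Ftheta x := exists p q : {poly F}, q != 0 /\ x = ev p / ev q.

Lemma in_Ftheta_evalA a : in_Ftheta (ev a).
Proof. by exists a, 1; rewrite oner_neq0 evalA1 divr1. Qed.

Lemma in_FthetaB x y : in_Ftheta x -> in_Ftheta y -> in_Ftheta (x - y).
Proof.
move=> [p [q [q_neq0 ->]]] [p' [q' [q'_neq0 ->]]].
exists (p * q' - p' * q), (q * q'); split; first by rewrite mulf_neq0.
have := evalA_theta_neq0 iota abs_ax abs_theta q_neq0.
have := evalA_theta_neq0 iota abs_ax abs_theta q'_neq0.
by move=> h h'; rewrite evalAB !evalAM; field; rewrite h h'.
Qed.

Lemma in_Ftheta_div x y : in_Ftheta x -> in_Ftheta y -> y != 0 -> in_Ftheta (x / y).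
Proof.
move=> [p [q [q_neq0 ->]]] [p' [q' [q'_neq0 ->]]].
have [->|p'_neq0] := eqVneq p' 0; first by rewrite evalA0 mul0r eqxx.
exists (p * q'), (q * p'); split; first by rewrite mulf_neq0.
have := evalA_theta_neq0 iota abs_ax abs_theta q_neq0.
have := evalA_theta_neq0 iota abs_ax abs_theta q'_neq0.
have := evalA_theta_neq0 iota abs_ax abs_theta p'_neq0.
by move=> h h' h''; rewrite !evalAM; field; rewrite h h' h''.
Qed.

Lemma Kinf_evalA a : Kinf (ev a).
Proof.
exists (fun=> a), (fun=> 1); split=> [_|]; first exact: oner_neq0.
by rewrite evalA1 divr1; apply: cvgC_cst.
Qed.

Lemma Kinf_lim (u : nat -> C) l : (forall n, in_Ftheta (u n)) -> cvgC abs u l -> Kinf l.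
Proof.
move=> uF ul; have /choice[pq hpq] : forall n, exists pq : {poly F} * {poly F},
    pq.2 != 0 /\ u n = ev pq.1 / ev pq.2.
  by move=> n; have [p [q [q_neq0 e]]] := uF n; exists (p, q).
exists (fun n => (pq n).1), (fun n => (pq n).2); split=> [n|]; first by case: (hpq n).
by apply: eq_cvgC ul _ => n; case: (hpq n).
Qed.

Variables (r : nat) (z : nat -> C).
Hypothesis z_indep : forall c : nat -> C, (forall i, (i < r)%N -> Kinf (c i)) ->
  \sum_(i < r) c i * z i = 0 -> forall i, (i < r)%N -> c i = 0.

Lemma indep_sum_neq0 k (beta : nat -> C) : (k < r)%N ->
  (forall i, (i < k)%N -> Kinf (beta i)) -> \sum_(i < k) beta i * z i + z k != 0.
Proof.
move=> kr Kbeta; apply/eqP => sum0.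
pose c i := if (i < k)%N then beta i else if i == k then 1 else 0.
have Kc i : (i < r)%N -> Kinf (c i).
  move=> _; rewrite /c; case: ltnP => [/Kbeta //|_].
  rewrite -(evalA1 iota theta) -(evalA0 iota theta).
  by case: eqP => _; apply: Kinf_evalA.
have csum : \sum_(i < r) c i * z i = \sum_(i < k) beta i * z i + z k.
  rewrite (bigID (fun i : 'I_r => (i < k.+1)%N)) /= [X in _ + X]big1 => [|i]; last first.
    by rewrite -leqNgt => ki; rewrite /c ifF ?ifF ?mul0r //; lia.
  rewrite addr0 -(big_ord_widen r (fun i => c i * z i) kr) big_ord_recr /=.
  rewrite /c ltnn eqxx mul1r; congr (_ + _).
  by apply: eq_bigr => i _; rewrite ltn_ord.
have := z_indep Kc (etrans csum sum0) kr; rewrite /c ltnn eqxx.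
by apply/eqP; rewrite oner_eq0.
Qed.

Definition coef_bound k (c : R) := forall b : nat -> C,
  (forall i, (i < k)%N -> in_Ftheta (b i)) ->
  forall j, (j < k)%N -> c * abs (b j) <= abs (\sum_(i < k) b i * z i).

(* For [j < k], the bound on the first [k] coefficients forces [|b j| <= |z k| / ck * |b k|]. *)
Lemma coef_bound_last k (ck del : R) (b : nat -> C) j : 0 < ck -> coef_bound k ck ->
  (forall i, (i < k.+1)%N -> in_Ftheta (b i)) -> (j < k.+1)%N -> 0 < del -> del <= ck ->
  abs (\sum_(i < k.+1) b i * z i) < del * abs (b j) ->
  abs (\sum_(i < k.+1) b i * z i) < del * Num.max 1 (abs (z k) / ck) * abs (b k).
Proof.
move=> ck_gt0 ckB bF jk del_gt0 del_le S_lt; rewrite -mulrA.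
apply: (lt_le_trans S_lt); rewrite ler_pM2l //.
move: jk; rewrite ltnS leq_eqVlt => /orP[/eqP-> | jk].
  by rewrite ler_peMl ?abs_ge0 // le_max lexx.
set S := \sum_(i < k.+1) _ in S_lt *.
have Sk : \sum_(i < k) b i * z i = S - b k * z k by rewrite /S big_ord_recr addrK.
have := ckB b (fun i ik => bF i (ltnW ik)) j jk.
rewrite Sk => /le_trans/(_ (abs_sub_le_max abs_ax _ _)); rewrite le_max => /orP[ckS|].
  have := lt_le_trans S_lt (ler_wpM2r (abs_ge0 abs_ax _) del_le).
  by rewrite ltNge ckS.
rewrite absM // => ck_bj; apply: le_trans (_ : abs (b j) <= abs (z k) / ck * abs (b k)) _.
  by rewrite mulrAC ler_pdivlMr // mulrC [abs (z k) * _]mulrC.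
by rewrite ler_wpM2r ?abs_ge0 // le_max lexx orbT.
Qed.

(* A combination beating [min ck (eta / rho)] for [k.+1], divided by its last coefficient. *)
Lemma approx_last k (ck : R) : 0 < ck -> coef_bound k ck ->
  ~ (exists2 c, 0 < c & coef_bound k.+1 c) -> forall eta : R, 0 < eta -> exists e : nat -> C,
    (forall i, (i < k)%N -> in_Ftheta (e i)) /\ abs (\sum_(i < k) e i * z i + z k) < eta.
Proof.
move=> ck_gt0 ckB no_bound eta eta_gt0; set rho := Num.max 1 (abs (z k) / ck).
have rho_gt0 : 0 < rho by rewrite lt_max ltr01.
set del := Num.min ck (eta / rho).
have del_gt0 : 0 < del by rewrite lt_min ck_gt0 divr_gt0.
have [b bF [j jk S_lt]] : exists2 b : nat -> C, (forall i, (i < k.+1)%N -> in_Ftheta (b i)) &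
    exists2 j, (j < k.+1)%N & abs (\sum_(i < k.+1) b i * z i) < del * abs (b j).
  apply: contrapT => no_b; apply: no_bound; exists del => // b bF j jk.
  by rewrite leNgt; apply/negP => S_lt; apply: no_b; exists b => //; exists j.
have del_le : del <= ck by rewrite ge_min lexx.
have S_lt' := coef_bound_last ck_gt0 ckB bF jk del_gt0 del_le S_lt.
have bk_neq0 : b k != 0.
  by apply: contraTneq S_lt' => ->; rewrite abs0 // mulr0 ltNge abs_ge0.
exists (fun i => b i / b k); split=> [i ik|].
  exact: in_Ftheta_div (bF i (ltnW ik)) (bF k (ltnSn k)) bk_neq0.
have -> : \sum_(i < k) b i / b k * z i + z k = (\sum_(i < k.+1) b i * z i) / b k.
  rewrite big_ord_recr /= mulrDl mulr_suml [b k * z k]mulrC mulfK //.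
  by congr (_ + _); apply: eq_bigr => i _; rewrite mulrAC.
rewrite absM // absV // ltr_pdivrMr ?abs_gt0 //.
apply: lt_le_trans S_lt' _; rewrite ler_wpM2r ?abs_ge0 //.
by rewrite -ler_pdivlMr // ge_min lexx orbT.
Qed.

Lemma coef_bound_cauchy k (ck : R) (e : nat -> nat -> C) : 0 < ck -> coef_bound k ck ->
  (forall n i, (i < k)%N -> in_Ftheta (e n i)) ->
  (forall n, abs (\sum_(i < k) e n i * z i + z k) < n.+1%:R^-1) ->
  forall i, (i < k)%N -> cauchyC abs (fun n => e n i).
Proof.
move=> ck_gt0 ckB eF e_small i ik eps eps_gt0.
have [N hN] := invSn_lt (mulr_gt0 ck_gt0 eps_gt0).
exists N => m n Nm Nn; rewrite -(ltr_pM2l ck_gt0).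
have eF_mn j jk : in_Ftheta (e m j - e n j) := in_FthetaB (eF m j jk) (eF n j jk).
apply: le_lt_trans (ckB _ eF_mn i ik) _.
have -> : \sum_(j < k) (e m j - e n j) * z j =
    (\sum_(j < k) e m j * z j + z k) - (\sum_(j < k) e n j * z j + z k).
  by rewrite opprD addrACA subrr addr0 -sumrB; apply: eq_bigr => j _; rewrite mulrBl.
by apply: (abs_sub_lt abs_ax); apply: lt_trans (e_small _) (hN _ _).
Qed.

(* Approximations of [z k] by [F(theta)]-combinations of the previous [z i] would
   converge to a [K_infinity]-linear relation. *)
Lemma not_approx_last k (ck : R) : (k < r)%N -> 0 < ck -> coef_bound k ck ->
  ~ (forall eta : R, 0 < eta -> exists e : nat -> C,
       (forall i, (i < k)%N -> in_Ftheta (e i)) /\ abs (\sum_(i < k) e i * z i + z k) < eta).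
Proof.
move=> kr ck_gt0 ckB approx.
have /choice[e he] (n : nat) : exists e : nat -> C,
    (forall i, (i < k)%N -> in_Ftheta (e i)) /\ abs (\sum_(i < k) e i * z i + z k) < n.+1%:R^-1.
  by apply: approx; rewrite invr_gt0 ltr0Sn.
have eF n i : (i < k)%N -> in_Ftheta (e n i) by case: (he n) => + _; apply.
have e_small n : abs (\sum_(i < k) e n i * z i + z k) < n.+1%:R^-1 by case: (he n).
have /choice[beta hbeta] (i : nat) : exists l, (i < k)%N -> cvgC abs (fun n => e n i) l.
  have [ik|_] := ltnP i k; last by exists 0.
  by have [l hl] := complete (coef_bound_cauchy ck_gt0 ckB eF e_small ik); exists l.
have Kbeta i : (i < k)%N -> Kinf (beta i).
  by move=> ik; apply: Kinf_lim (fun n => eF n i ik) (hbeta i ik).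
apply: (negP (indep_sum_neq0 kr Kbeta)); apply/eqP.
apply: (cvgC_unique abs_ax _ (cvgC_to0 e_small)).
apply: (cvgCD abs_ax _ (cvgC_cst abs_ax _)).
apply: (cvgC_sum abs_ax (u := fun n i => e n i * z i) (a := fun i => beta i * z i)).
move=> i ik /=.
exact: (cvgCMr abs_ax (z i) (hbeta i ik)).
Qed.

Lemma coef_bound_exists k : (k <= r)%N -> exists2 c, 0 < c & coef_bound k c.
Proof.
elim: k => [_|k IH kr]; first by exists 1 => // b _ j; rewrite ltn0.
have [ck ck_gt0 ckB] := IH (ltnW kr).
apply: contrapT => no_bound.
exact: not_approx_last kr ck_gt0 ckB (approx_last ck_gt0 ckB no_bound).
Qed.

Lemma evalA_coef_bound : exists2 c : R, 0 < c &
  forall (b : nat -> {poly F}) j, (j < r)%N ->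
    c * abs (ev (b j)) <= abs (\sum_(i < r) ev (b i) * z i).
Proof.
have [c c_gt0 cB] := coef_bound_exists (leqnn r).
by exists c => // b j jr; apply: (cB (fun i => ev (b i))) => // i _; apply: in_Ftheta_evalA.
Qed.

End LowerBound.

Section FiniteAdditiveSubgroup.
Variables (K : fieldType) (V : seq K).
Hypothesis V_uniq : uniq V.
Hypothesis V0 : 0 \in V.
Hypothesis VB : forall a b, a \in V -> b \in V -> a - b \in V.

Lemma mem_opp a : a \in V -> - a \in V.
Proof. by move=> Va; rewrite -sub0r VB. Qed.

Lemma perm_shift mu : mu \in V -> perm_eq [seq v - mu | v <- V] V.
Proof.
move=> Vmu; apply: uniq_perm => //; first by rewrite map_inj_uniq // => a b /addIr.
move=> x; apply/mapP/idP => [[v Vv ->]|Vx]; first exact: VB.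
by exists (x + mu); rewrite ?addrK // -[mu]opprK VB ?mem_opp.
Qed.

Lemma perm_opp : perm_eq [seq - v | v <- V] V.
Proof.
apply: uniq_perm => //; first by rewrite map_inj_uniq // => a b /oppr_inj.
move=> x; apply/mapP/idP => [[v Vv ->]|Vx]; first exact: mem_opp.
by exists (- x); rewrite ?opprK ?mem_opp.
Qed.

(* The derivative of [\prod_(w <- V) ('X - w%:P)]. *)
Definition sum_prod_rem : {poly K} := \sum_(v <- V) \prod_(w <- V | w != v) ('X - w%:P).

Lemma horner_sum_prod_rem x :
  sum_prod_rem.[x] = \sum_(v <- V) \prod_(w <- V | w != v) (x - w).
Proof.
rewrite /sum_prod_rem horner_sum; apply: eq_bigr => v _.
by rewrite horner_prod; apply: eq_bigr => w _; rewrite hornerXsubC.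
Qed.

Lemma sum_prod_rem_shift mu : mu \in V -> sum_prod_rem.[mu] = sum_prod_rem.[0].
Proof.
move=> Vmu; rewrite !horner_sum_prod_rem -[in RHS](perm_big _ (perm_shift Vmu)) big_map.
apply: eq_bigr => v _; rewrite -[in RHS](perm_big _ (perm_shift Vmu)) big_map.
by apply: eq_big => [w|w _]; rewrite ?(inj_eq (addIr _)) // sub0r opprB.
Qed.

Lemma size_sum_prod_rem : (size sum_prod_rem <= size V)%N.
Proof.
rewrite /sum_prod_rem big_seq; elim/big_ind: _ => [|p p' ? ?|v Vv].
- by rewrite size_poly0.
- by apply: leq_trans (size_polyD _ _) _; rewrite geq_max; apply/andP.
rewrite -big_filter size_prod_XsubC -rem_filter // size_rem // prednK //.
by move: Vv; case: (V).
Qed.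

(* Shift invariance under [V] gives [size V] roots to [sum_prod_rem - sum_prod_rem.[0]],
   whose size is at most [size V]. *)
Lemma sum_prod_rem_const x : sum_prod_rem.[x] = sum_prod_rem.[0].
Proof.
set E := sum_prod_rem - (sum_prod_rem.[0])%:P.
suff /(congr1 (horner^~ x)) : E = 0.
  by rewrite /E !hornerE => /eqP; rewrite subr_eq0 => /eqP.
apply/eqP; apply: contraT => E_neq0.
have rootsE : all (root E) V.
  by apply/allP => mu Vmu; rewrite /root /E !hornerE sum_prod_rem_shift // subrr.
have := max_poly_roots E_neq0 rootsE V_uniq.
rewrite ltnNge (leq_trans (size_polyD _ _)) // geq_max size_sum_prod_rem size_polyN.
by rewrite (leq_trans (size_polyC_leq1 _)) // -has_predT; apply/hasP; exists 0.
Qed.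

Lemma sum_prod_rem0 : sum_prod_rem.[0] = \prod_(w <- V | w != 0) (0 - w).
Proof.
rewrite horner_sum_prod_rem (bigD1_seq 0) //= [X in _ + X]big1_seq ?addr0 //.
move=> v /andP[v_neq0 Vv].
rewrite -big_filter (bigD1_seq 0) /= ?subrr ?mul0r ?filter_uniq //.
by rewrite mem_filter eq_sym v_neq0.
Qed.

Lemma sum_prod_rem0_neq0 : sum_prod_rem.[0] != 0.
Proof.
rewrite sum_prod_rem0 prodf_seq_neq0; apply/allP => w _.
by apply/implyP => w_neq0; rewrite sub0r oppr_eq0.
Qed.

Lemma sum_inv_add y : y \notin V ->
  \sum_(v <- V) (y + v)^-1 = sum_prod_rem.[0] / \prod_(w <- V) (y - w).
Proof.
move=> Vy; have yw_neq0 w : w \in V -> y - w != 0.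
  by move=> Vw; rewrite subr_eq0; apply: contraNneq Vy => ->.
rewrite -(perm_big _ perm_opp) big_map -(sum_prod_rem_const y) horner_sum_prod_rem.
rewrite mulr_suml big_seq [RHS]big_seq; apply: eq_bigr => v Vv.
rewrite (bigD1_seq v) //= invfM mulrCA mulfV ?mulr1 // prodf_seq_neq0.
by apply/allP => w Vw; apply/implyP => _; apply: yw_neq0.
Qed.

Lemma prod_1_sub_divE y :
  y * \prod_(v <- V | v != 0) (1 - y / v) = \prod_(w <- V) (y - w) / sum_prod_rem.[0].
Proof.
rewrite sum_prod_rem0 (bigD1_seq 0 V0 V_uniq) /= subr0 -mulrA -prodf_div.
by congr (_ * _); apply: eq_bigr => v v_neq0; field; rewrite oppr_eq0 v_neq0.
Qed.

Lemma prod_1_sub_div_sum_inv y : y \notin V ->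
  y * \prod_(v <- V | v != 0) (1 - y / v) * \sum_(v <- V) (y + v)^-1 = 1.
Proof.
move=> Vy; have P_neq0 : \prod_(w <- V) (y - w) != 0.
  rewrite prodf_seq_neq0; apply/allP => w Vw; apply/implyP => _.
  by rewrite subr_eq0; apply: contraNneq Vy => ->.
by rewrite prod_1_sub_divE sum_inv_add // mulrA divfK ?sum_prod_rem0_neq0 // mulfV.
Qed.

End FiniteAdditiveSubgroup.

Section Boxes.
Variable F : finFieldType.

Definition extf N (h : {ffun 'I_N -> F}) : {ffun 'I_N.+1 -> F} :=
  [ffun i : 'I_N.+1 => (polyOf h)`_i].

Lemma polyOf_extf N (h : {ffun 'I_N -> F}) : polyOf (extf h) = polyOf h.
Proof.
apply/polyP => i; have [iN|Ni] := ltnP i N.+1.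
  by rewrite (coef_polyOf (extf h) (Ordinal iN)) ffunE.
by rewrite !coef_polyOf_ge // ltnW.
Qed.

Lemma extf_inj N : injective (@extf N).
Proof.
by move=> g h /(congr1 (@polyOf F N.+1)); rewrite !polyOf_extf; apply: polyOf_inj.
Qed.

Lemma extf0 N : extf (0 : {ffun 'I_N -> F}) = 0.
Proof. by apply: polyOf_inj; rewrite polyOf_extf !polyOf0. Qed.

Variable k : nat.
Local Notation box N := {ffun 'I_k -> {ffun 'I_N -> F}}.

Definition extb N (g : box N) : box N.+1 := [ffun j => extf (g j)].

Lemma extb_inj N : injective (@extb N).
Proof.
move=> g h gh; apply/ffunP => j; apply: extf_inj.
by have := congr1 (fun f : box N.+1 => f j) gh; rewrite /= !ffunE.
Qed.

Lemma extb_eq0 N (g : box N) : (extb g == 0) = (g == 0).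
Proof.
have extb0 : extb (0 : box N) = 0 by apply/ffunP => j; rewrite !ffunE extf0.
by rewrite -(inj_eq (@extb_inj N)) extb0.
Qed.

Lemma polyOf_extb N (g : box N) j : polyOf (extb g j) = polyOf (g j).
Proof. by rewrite ffunE polyOf_extf. Qed.

Lemma not_extb_top N (g : box N.+1) :
  g \notin (@extb N) @: setT -> exists j, g j ord_max != 0.
Proof.
move=> g_new; apply/existsP; apply: contraR g_new; rewrite negb_exists => /forallP top0.
apply/imsetP; exists [ffun j => [ffun i => g j (widen_ord (leqnSn N) i)]] => //.
apply/ffunP => j; apply/ffunP => i; rewrite !ffunE.
have [iN|Ni] := ltnP i N.
  by rewrite (coef_polyOf _ (Ordinal iN)) !ffunE; congr (g j _); apply: val_inj.
have /eqP-> : i == ord_max by rewrite -val_eqE /= eqn_leq -ltnS ltn_ord.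
rewrite coef_polyOf_ge //.
by apply/eqP; rewrite -[_ == _]negbK top0.
Qed.

Lemma big_box_split (T : Type) (idx : T) (op : Monoid.com_law idx) N
    (G : box N.+1 -> T) (P : pred (box N.+1)) :
  \big[op/idx]_(g | P g) G g =
  op (\big[op/idx]_(g : box N | P (extb g)) G (extb g))
     (\big[op/idx]_(g | P g && (g \notin (@extb N) @: setT)) G g).
Proof.
rewrite (bigID (mem ((@extb N) @: setT))) /=; congr (op _ _).
rewrite (eq_bigl (fun g => (g \in (@extb N) @: setT) && P g)) => [|g]; last by rewrite andbC.
rewrite big_imset_cond => [|x y _ _]; last exact: extb_inj.
by apply: eq_bigl => g; rewrite in_setT.
Qed.

End Boxes.

Section FunCons.
Variables (T : finType) (m : nat).

Definition fcons (h : T) (g : {ffun 'I_m -> T}) : {ffun 'I_m.+1 -> T} :=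
  [ffun i => if unlift ord0 i is Some j then g j else h].

Lemma fcons0 h g : fcons h g ord0 = h.
Proof. by rewrite ffunE unlift_none. Qed.

Lemma fconsS h g j : fcons h g (lift ord0 j) = g j.
Proof. by rewrite ffunE liftK. Qed.

Lemma big_fcons (R : Type) (idx : R) (op : Monoid.com_law idx)
    (G : {ffun 'I_m.+1 -> T} -> R) :
  \big[op/idx]_f G f = \big[op/idx]_(h : T) \big[op/idx]_(g : {ffun 'I_m -> T}) G (fcons h g).
Proof.
rewrite pair_big /= (reindex (fun p : T * {ffun 'I_m -> T} => fcons p.1 p.2)) //.
exists (fun f : {ffun 'I_m.+1 -> T} => (f ord0, [ffun j : 'I_m => f (lift ord0 j)])).
  by move=> [h g] _ /=; rewrite fcons0; congr (_, _); apply/ffunP => j; rewrite ffunE fconsS.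
by move=> f _ /=; apply/ffunP => i; rewrite ffunE; case: unliftP => [j ->|->]; rewrite ?ffunE.
Qed.

End FunCons.

Section GeomTail.
Variables (R : realType) (F : finFieldType) (c : R).
Hypothesis c_gt0 : 0 < c.
Local Notation q := ((qF F)%:R : R).

Definition geom_tail N := (c * q ^+ N)^-1.

Lemma cq_gt0 N : 0 < c * q ^+ N.
Proof. by rewrite mulr_gt0 ?expq_gt0. Qed.

Lemma geom_tail_gt0 N : 0 < geom_tail N.
Proof. by rewrite invr_gt0 cq_gt0. Qed.

Lemma geom_tail_noninc m n : (m <= n)%N -> geom_tail n <= geom_tail m.
Proof. by move=> mn; rewrite lef_pV2 ?posrE ?cq_gt0 // ler_pM2l ?expq_le. Qed.

Lemma geom_tail_small eps : 0 < eps -> exists N, geom_tail N < eps.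
Proof.
move=> eps_gt0; have [N hN] := invSn_lt (mulr_gt0 c_gt0 eps_gt0); exists N.
rewrite /geom_tail invfM mulrC ltr_pdivrMr // mulrC.
apply: le_lt_trans (hN N (leqnn N)); rewrite lef_pV2 ?posrE ?expq_gt0 ?ltr0Sn //.
exact: expq_ge.
Qed.

End GeomTail.

Section LatticeSums.
Variables (R : realType) (F : finFieldType) (C : closedFieldType).
Variables (abs : C -> R) (iota : {rmorphism F -> C}) (theta : C).
Hypothesis abs_ax : abs_axioms abs.
Hypothesis abs_theta : abs theta = (qF F)%:R.
Hypothesis complete : completeC abs.
Local Notation ev a := (evalA iota a theta).
Local Notation q := ((qF F)%:R : R).

Variables (m : nat) (z : nat -> C) (c : R).
Hypothesis c_gt0 : 0 < c.
Hypothesis z_bound : forall (b : nat -> {poly F}) j, (j < m.+1)%N ->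
  c * abs (ev (b j)) <= abs (\sum_(i < m.+1) ev (b i) * z i).
Local Notation box N := {ffun 'I_m -> {ffun 'I_N -> F}}.
Local Notation tail := (geom_tail F c).

(* For the lattice [z~ A = pi~^-1 (pi~ z~ A)]: [lattice_pt g] is a lattice point, [yz a] is
   [a z_1], and [exp_prod a N], [recip_sum a N] truncate [exp_{z~ A}(a z_1)] and
   [sum_lambda (a z_1 + lambda)^-1]; note [u_a(z) = (pi~ exp_{z~ A}(a z_1))^-1]. *)
Definition lattice_pt N (g : box N) := \sum_(j < m) ev (polyOf (g j)) * z j.+1.
Definition yz a := ev a * z 0.
Definition recip_sum a N := \sum_(g : box N) (yz a + lattice_pt g)^-1.
Definition exp_prod a N := yz a * \prod_(g : box N | g != 0) (1 - yz a / lattice_pt g).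

Lemma lattice_pt0 N : lattice_pt (0 : box N) = 0.
Proof. by rewrite /lattice_pt big1 // => j _; rewrite ffunE polyOf0 evalA0 mul0r. Qed.

Lemma lattice_ptB N (g h : box N) : lattice_pt (g - h) = lattice_pt g - lattice_pt h.
Proof.
rewrite /lattice_pt -sumrB; apply: eq_bigr => j _.
by rewrite !ffunE polyOfB evalAB mulrBl.
Qed.

Lemma lattice_pt_extb N (g : box N) : lattice_pt (extb g) = lattice_pt g.
Proof. by apply: eq_bigr => j _; rewrite polyOf_extb. Qed.

Lemma z_bound_ord (b : 'I_m.+1 -> {poly F}) j :
  c * abs (ev (b j)) <= abs (\sum_(i < m.+1) ev (b i) * z i).
Proof.
pose b' i := if insub i is Some i' then b i' else 0.
have := z_bound b' (ltn_ord j); rewrite /b' valK.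
by under eq_bigr => i _ do rewrite valK.
Qed.

Lemma abs_yz_lattice_ge a N (g : box N) :
  c * abs (ev a) <= abs (yz a + lattice_pt g) /\
  forall j, c * abs (ev (polyOf (g j))) <= abs (yz a + lattice_pt g).
Proof.
pose b i := if unlift ord0 i is Some j then polyOf (g j) else a.
have -> : yz a + lattice_pt g = \sum_(i < m.+1) ev (b i) * z i.
  rewrite big_ord_recl /b unlift_none; congr (_ + _).
  by apply: eq_bigr => j _; rewrite liftK lift0.
split; first by have := z_bound_ord b ord0; rewrite /b unlift_none.
by move=> j; have := z_bound_ord b (lift ord0 j); rewrite /b liftK.
Qed.

Lemma abs_evalA_ge_top (p : {poly F}) N : p`_N != 0 -> q ^+ N <= abs (ev p).
Proof.
move=> pN_neq0; have p_neq0 : p != 0 by apply: contraNneq pN_neq0 => ->; rewrite coef0.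
rewrite abs_evalA_theta // expq_le // -ltnS prednK ?size_poly_gt0 //.
by rewrite ltnNge; apply: contra pN_neq0 => /leq_sizeP/(_ N (leqnn N))/eqP.
Qed.

Lemma abs_yz_lattice_new a N (g : box N.+1) :
  g \notin (@extb F m N) @: setT -> c * q ^+ N <= abs (yz a + lattice_pt g).
Proof.
move=> /not_extb_top[j top_neq0]; apply: le_trans (proj2 (abs_yz_lattice_ge a g) j).
by rewrite ler_pM2l // abs_evalA_ge_top // (coef_polyOf _ ord_max).
Qed.

Lemma abs_sum_new N (f : {ffun 'I_m.+1 -> {ffun 'I_N.+1 -> F}}) :
  f \notin (@extb F m.+1 N) @: setT ->
  c * q ^+ N <= abs (\sum_(i < m.+1) ev (polyOf (f i)) * z i).
Proof.
move=> /not_extb_top[j top_neq0]; apply: le_trans (z_bound_ord _ j).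
by rewrite ler_pM2l // abs_evalA_ge_top // (coef_polyOf _ ord_max).
Qed.

Lemma abs_inv_le_tail x N : c * q ^+ N <= abs x -> abs x^-1 <= tail N.
Proof.
move=> x_ge; rewrite absV // lef_pV2 ?posrE ?cq_gt0 //.
exact: lt_le_trans (cq_gt0 F c_gt0 N) x_ge.
Qed.

Lemma recip_sum_step a N : abs (recip_sum a N.+1 - recip_sum a N) <= tail N.
Proof.
rewrite /recip_sum (big_box_split _ (fun g => (yz a + lattice_pt g)^-1) predT) /=.
under eq_bigr => g _ do rewrite lattice_pt_extb.
rewrite addrAC subrr add0r; apply: (abs_sum_le abs_ax) => [|g g_new].
  exact/ltW/geom_tail_gt0.
exact/abs_inv_le_tail/abs_yz_lattice_new.
Qed.

Lemma recip_sum_cvg a : exists s, cvgC abs (recip_sum a) s /\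
  forall N, abs (s - recip_sum a N) <= tail N.
Proof.
apply: (cvgC_steps abs_ax _ (recip_sum_step a) complete (geom_tail_small F c_gt0)).
exact: geom_tail_noninc.
Qed.

Lemma lattice_pt_eq0 N (g : box N) : lattice_pt g = 0 -> g = 0.
Proof.
move=> g0; apply/ffunP => j; rewrite ffunE; apply: polyOf_inj; rewrite polyOf0.
apply/eqP; apply: contraT => gj_neq0.
have := proj2 (abs_yz_lattice_ge 0 g) j; rewrite /yz evalA0 mul0r add0r g0 abs0 //.
rewrite pmulr_rle0 // leNgt.
by rewrite (abs_gt0 abs_ax (evalA_theta_neq0 iota abs_ax abs_theta gj_neq0)).
Qed.

Lemma lattice_pt_inj N : injective (@lattice_pt N).
Proof.
move=> g h gh; apply/eqP; rewrite -subr_eq0; apply/eqP/lattice_pt_eq0.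
by rewrite lattice_ptB gh subrr.
Qed.

Lemma yz_lattice_neq0 a N (g : box N) : a != 0 -> yz a + lattice_pt g != 0.
Proof.
move=> a_neq0; apply: contraTneq (proj1 (abs_yz_lattice_ge a g)) => ->.
rewrite abs0 // pmulr_rle0 // -ltNge.
exact: (abs_gt0 abs_ax (evalA_theta_neq0 iota abs_ax abs_theta a_neq0)).
Qed.

Lemma exp_prod_recip_sum a N : a != 0 -> exp_prod a N * recip_sum a N = 1.
Proof.
move=> a_neq0; pose V := [seq lattice_pt g | g <- index_enum (box N)].
have V_uniq : uniq V by rewrite map_inj_uniq ?index_enum_uniq //; apply: lattice_pt_inj.
have V0 : 0 \in V by apply/mapP; exists 0; rewrite ?mem_index_enum ?lattice_pt0.
have VB u v : u \in V -> v \in V -> u - v \in V.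
  move=> /mapP[g _ ->] /mapP[h _ ->]; apply/mapP.
  by exists (g - h); rewrite ?mem_index_enum ?lattice_ptB.
have yV : yz a \notin V.
  apply/mapP => -[g _ yg]; have := yz_lattice_neq0 (0 - g) a_neq0.
  by rewrite lattice_ptB lattice_pt0 -yg sub0r subrr eqxx.
have := prod_1_sub_div_sum_inv V_uniq V0 VB yV; rewrite /V !big_map => <-.
rewrite /exp_prod /recip_sum; congr (_ * _ * _); apply: eq_bigl => g.
by rewrite -(lattice_pt0 N) (inj_eq (@lattice_pt_inj N)).
Qed.

Lemma recip_sum_exp_prod a N : a != 0 -> recip_sum a N = (exp_prod a N)^-1.
Proof. by move=> a_neq0; rewrite (mulr1_eq (exp_prod_recip_sum N a_neq0)). Qed.

Lemma exp_prod_neq0 a N : a != 0 -> exp_prod a N != 0.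
Proof.
move=> a_neq0; apply/eqP => P0; have := exp_prod_recip_sum N a_neq0.
by rewrite P0 mul0r => /eqP; rewrite eq_sym oner_eq0.
Qed.

(* The new lattice points are too large to change the absolute value of the product. *)
Lemma exp_prod_step a N :
  abs (yz a) < c * q ^+ N -> abs (exp_prod a N.+1) = abs (exp_prod a N).
Proof.
move=> y_lt; rewrite /exp_prod.
rewrite (big_box_split _ (fun g => 1 - yz a / lattice_pt g) (fun g => g != 0)) /=.
under eq_big => [g|g _] do [rewrite extb_eq0 | rewrite lattice_pt_extb].
rewrite mulrA absM // (abs_prod abs_ax) [X in _ * X]big1 ?mulr1 // => g /andP[_ g_new].
have lat_ge := abs_yz_lattice_new 0 g_new; rewrite /yz evalA0 mul0r add0r in lat_ge.
have lat_gt0 : 0 < abs (lattice_pt g) := lt_le_trans (cq_gt0 F c_gt0 N) lat_ge.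
rewrite abs_1_sub // absM // absV // ltr_pdivrMr // mul1r.
exact: lt_le_trans y_lt lat_ge.
Qed.

Lemma exp_prod_abs_const a N0 : abs (yz a) < c * q ^+ N0 ->
  forall N, (N0 <= N)%N -> abs (exp_prod a N) = abs (exp_prod a N0).
Proof.
move=> y_lt N /subnK<-; elim: (N - N0)%N => [|k IH] /=; first by rewrite add0n.
rewrite addSn exp_prod_step ?IH //; apply: (lt_le_trans y_lt).
by rewrite ler_pM2l // expq_le // leq_addl.
Qed.

Lemma exp_partial_eq pit a N : pit != 0 ->
  exp_partial iota theta m.+1 z pit a N = pit * exp_prod a N.
Proof.
move=> pit_neq0; rewrite /exp_partial /= -[pit * _ * z 0]mulrA -/(yz a) -mulrA.
congr (_ * (_ * _)); apply: eq_bigr => g _.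
by rewrite invfM mulrACA divff // mul1r.
Qed.

Lemma exp_partial_cvg pit a s : pit != 0 -> a != 0 -> cvgC abs (recip_sum a) s ->
  cvgC abs (exp_partial iota theta m.+1 z pit a) (pit / s).
Proof.
move=> pit_neq0 a_neq0 sa.
have [N0 y_lt] : exists N0, abs (yz a) < c * q ^+ N0.
  have y1_gt0 : 0 < (abs (yz a) + 1)^-1 by rewrite invr_gt0 ltr_wpDl ?abs_ge0.
  have [N0] := geom_tail_small F c_gt0 y1_gt0.
  rewrite ltf_pV2 ?posrE ?cq_gt0 ?ltr_wpDl ?abs_ge0 // => y_lt.
  by exists N0; apply: lt_trans y_lt; rewrite ltrDl.
set K := (abs (exp_prod a N0))^-1.
have K_gt0 : 0 < K by rewrite invr_gt0 (abs_gt0 abs_ax (exp_prod_neq0 _ a_neq0)).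
have recipK N : (N0 <= N)%N -> abs (recip_sum a N) = K.
  by move=> N0N; rewrite recip_sum_exp_prod // absV // (exp_prod_abs_const y_lt N0N).
rewrite mulrC; apply: eq_cvgC (cvgCMr abs_ax pit (cvgC_inv abs_ax sa K_gt0 recipK)) _ => N.
by rewrite exp_partial_eq // recip_sum_exp_prod // invrK mulrC.
Qed.

Lemma lhs_partial_eq t N : lhs_partial iota theta m.+1 z t N =
  \sum_(h : {ffun 'I_N -> F}) evalA iota (polyOf h) t * recip_sum (polyOf h) N.
Proof.
pose G (f : {ffun 'I_m.+1 -> {ffun 'I_N -> F}}) :=
  (\sum_(i < m.+1 | val i == 0%N) evalA iota (polyOf (f i)) t) /
  (\sum_(i < m.+1) ev (polyOf (f i)) * z i).
have G0 : G 0 = 0 by rewrite /G big1 ?mul0r // => i _; rewrite ffunE polyOf0 evalA0.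
transitivity (\sum_f G f).
  by rewrite (bigD1 (0 : {ffun 'I_m.+1 -> {ffun 'I_N -> F}})) //= G0 add0r.
rewrite big_fcons; apply: eq_bigr => h _; rewrite /recip_sum mulr_sumr.
apply: eq_bigr => g _; rewrite /G; congr (_ * _).
  by rewrite big_mkcond big_ord_recl /= fcons0 big1 ?addr0.
rewrite big_ord_recl fcons0 /yz; congr (_ + _)^-1.
by apply: eq_bigr => j _; rewrite fconsS lift0.
Qed.

Lemma lhs_partial_step t N : abs t <= 1 ->
  abs (lhs_partial iota theta m.+1 z t N.+1 - lhs_partial iota theta m.+1 z t N) <= tail N.
Proof.
move=> t_le1; rewrite {1}/lhs_partial.
pose G M (f : {ffun 'I_m.+1 -> {ffun 'I_M -> F}}) :=
  (\sum_(i < m.+1 | val i == 0%N) evalA iota (polyOf (f i)) t) /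
  (\sum_(i < m.+1) ev (polyOf (f i)) * z i).
rewrite (big_box_split _ (G N.+1) (fun f => f != 0)) /=.
have -> : \sum_(f | extb f != 0) G N.+1 (extb f) = lhs_partial iota theta m.+1 z t N.
  apply: eq_big => f; first by rewrite extb_eq0.
  by move=> _; rewrite /G; congr (_ / _); apply: eq_bigr => i _; rewrite polyOf_extb.
rewrite addrAC subrr add0r; apply: (abs_sum_le abs_ax) => [|f /andP[_ f_new]].
  exact/ltW/geom_tail_gt0.
rewrite /G absM // -[tail N]mul1r; apply: ler_pM; rewrite ?abs_ge0 //.
  by apply: (abs_sum_le abs_ax) => // i _; apply: abs_evalA_le1.
exact/abs_inv_le_tail/abs_sum_new.
Qed.

Lemma rhs_lhs_near t N pit (sig : {poly F} -> C) : abs t <= 1 -> pit != 0 ->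
  (forall a N, abs (sig a - recip_sum a N) <= tail N) ->
  abs (rhs_partial iota pit (fun a => pit / sig a) t N -
       lhs_partial iota theta m.+1 z t N) <= tail N.
Proof.
move=> t_le1 pit_neq0 sig_near.
rewrite lhs_partial_eq (bigD1 (0 : {ffun 'I_N -> F})) //= polyOf0 evalA0 mul0r add0r.
rewrite /rhs_partial mulr_sumr -sumrB; apply: (abs_sum_le abs_ax) => [|h _].
  exact/ltW/geom_tail_gt0.
rewrite invf_div mulrCA [pit * _]mulrC mulfVK // -mulrBr absM // -[tail N]mul1r.
by apply: ler_pM; rewrite ?abs_ge0 ?abs_evalA_le1.
Qed.

End LatticeSums.

Section PiTilde.
Variables (R : realType) (F : finFieldType) (C : closedFieldType).
Variables (abs : C -> R) (theta : C).
Hypothesis abs_ax : abs_axioms abs.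
Hypothesis abs_theta : abs theta = (qF F)%:R.
Hypothesis complete : completeC abs.
Variable xi : C.
Hypothesis xi_neq0 : xi != 0.
Local Notation q := ((qF F)%:R : R).
Local Notation pi_partial := (pi_partial F theta xi).

Lemma theta_neq0 : theta != 0.
Proof.
by apply/eqP => theta0; have := @expq_gt0 R F 1; rewrite expr1 -abs_theta theta0 abs0 // ltxx.
Qed.

Lemma abs_inv_theta_pow i : abs (theta ^+ (qF F ^ i - 1))^-1 <= (q ^+ i)^-1.
Proof.
rewrite absV // absX // abs_theta lef_pV2 ?posrE ?expq_gt0 // expq_le //.
by have := ltn_expl i (@qF_gt1 F); lia.
Qed.

Lemma pi_partialS N :
  pi_partial N.+1 = pi_partial N * (1 - (theta ^+ (qF F ^ N.+1 - 1))^-1)^-1.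
Proof. by rewrite /pi_partial big_nat_recr //= mulrA. Qed.

Lemma abs_1_sub_inv_theta_pow i :
  (0 < i)%N -> abs (1 - (theta ^+ (qF F ^ i - 1))^-1) = 1.
Proof.
move=> i_gt0; apply: (abs_1_sub abs_ax); apply: le_lt_trans (abs_inv_theta_pow i) _.
by rewrite invf_lt1 ?expq_gt0 // -(expr0 q) expq_lt.
Qed.

Lemma abs_pi_partial N : abs (pi_partial N) = abs (theta * xi).
Proof.
elim: N => [|N IH]; first by rewrite /pi_partial big_geq // mulr1.
by rewrite pi_partialS absM // IH absV // abs_1_sub_inv_theta_pow // invr1 mulr1.
Qed.

Lemma pi_partial_step N :
  abs (pi_partial N.+1 - pi_partial N) <= geom_tail F (q / abs (theta * xi)) N.
Proof.
set e := (theta ^+ (qF F ^ N.+1 - 1))^-1.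
have e_abs := abs_1_sub_inv_theta_pow (ltn0Sn N).
have e_neq0 : 1 - e != 0.
  by apply: contra_eq_neq e_abs => ->; rewrite abs0 // eq_sym oner_neq0.
have -> : pi_partial N.+1 - pi_partial N = pi_partial N * (e / (1 - e)).
  by rewrite pi_partialS -/e; field.
rewrite absM // abs_pi_partial [abs (e / _)]absM // absV // e_abs invr1 mulr1.
have -> : geom_tail F (q / abs (theta * xi)) N = abs (theta * xi) * (q ^+ N.+1)^-1.
  by rewrite /geom_tail mulrAC invf_div exprS.
by rewrite ler_wpM2l ?abs_ge0 ?abs_inv_theta_pow.
Qed.

Lemma pi_partial_cvg : exists2 pit, cvgC abs pi_partial pit & pit != 0.
Proof.
have thxi_gt0 : 0 < abs (theta * xi) by rewrite (abs_gt0 abs_ax) // mulf_neq0 ?theta_neq0.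
have c_gt0 : 0 < q / abs (theta * xi) by rewrite divr_gt0 ?(lt_trans ltr01 q_gt1).
have [pit [pit_cvg _]] := cvgC_steps abs_ax (geom_tail_noninc F c_gt0) pi_partial_step
  complete (geom_tail_small F c_gt0).
have pit_abs := cvgC_abs_eq abs_ax pit_cvg thxi_gt0 (fun N (_ : (0 <= N)%N) => abs_pi_partial N).
exists pit => //; apply: contraTneq thxi_gt0 => pit0.
by rewrite -pit_abs pit0 abs0 // ltxx.
Qed.

End PiTilde.

Theorem lemma3p8 (R : realType) (F : finFieldType) (C : closedFieldType)
  (abs : C -> R) (iota : {rmorphism F -> C}) (theta : C)
  (HC : is_Cinf abs iota theta)
  (xi : C) (Hxi : xi ^+ (qF F).-1 = - theta)
  (r : nat) (hr : (2 <= r)%N) (z : nat -> C) (Hz : in_Omega abs iota theta r z)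
  (t : C) (Ht : abs t <= 1) :
  exists pit : C, cvgC abs (pi_partial F theta xi) pit /\
  exists E : {poly F} -> C,
    (forall a : {poly F}, a != 0 -> cvgC abs (exp_partial iota theta r z pit a) (E a)) /\
  exists S : C,
    cvgC abs (lhs_partial iota theta r z t) S /\
    cvgC abs (rhs_partial iota pit E t) S.
Proof.
case: HC => abs_ax [abs_theta [complete _]]; case: Hz => z_indep _.
case: r hr z_indep => [//|m] _ z_indep. (* [r >= 1] is enough *)
have xi_neq0 : xi != 0.
  apply: contraTneq (theta_neq0 abs_ax abs_theta) => xi0.
  by rewrite -oppr_eq0 -Hxi xi0 expr0n (gtn_eqF (@qF_pred_gt0 F)) eqxx.
have [pit pit_cvg pit_neq0] := pi_partial_cvg abs_ax abs_theta complete xi_neq0.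
have [c c_gt0 z_bound] := evalA_coef_bound abs_ax abs_theta complete z_indep.
have /choice[sig sig_cvg] := recip_sum_cvg abs_ax abs_theta complete c_gt0 z_bound.
have tail_noninc := geom_tail_noninc F c_gt0; have tail_small := geom_tail_small F c_gt0.
exists pit; split=> //; exists (fun a => pit / sig a); split.
  move=> a a_neq0; apply: (exp_partial_cvg abs_ax abs_theta c_gt0 z_bound pit_neq0 a_neq0).
  by case: (sig_cvg a).
have [S [S_cvg _]] := cvgC_steps abs_ax tail_noninc
  (fun N => lhs_partial_step abs_ax abs_theta c_gt0 z_bound N Ht) complete tail_small.
exists S; split=> //; apply: (cvgC_near abs_ax tail_noninc tail_small _ S_cvg) => N.
by apply: (rhs_lhs_near abs_ax c_gt0) => // a; case: (sig_cvg a).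
Qed.
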